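(* Let $X=\{a,\dots,b\}\subseteq\mathbb{N}$ and let $f^p:\mathcal{P}^n\to X$ be a non-dictatorial generalized median voter scheme with monotonic family of fixed ballots $p=\{p_S\}_{S\in 2^N}$. Then $f^p$ is NOM if and only if, for each $i\in N$, $p_{N\setminus\{i\}}\in\{a,a+1\}$ and $p_{\{i\}}\in\{b-1,b\}$.
   Context: $N=\{1,\dots,n\}$, $n\ge2$; $X=\{a,a+1,\dots,b\}$, $|X|\ge2$; $\mathcal{P}$ all strict linear orders on $X$; $t(P_i)$ the top of $P_i$. A monotonic family of fixed ballots is $p=\{p_S\}_{S\subseteq N}$ with $p_S\in X$, $p_N=a$, $p_\emptyset=b$, and $p_Q\le p_T$ whenever $T\subseteq Q$. The generalized median voter scheme is $f^p(P)=\min_{S\subseteq N}\max_{j\in S}\{t(P_j),p_S\}$. A rule is dictatorial if there is $i$ with $f(P)=t(P_i)$ for all $P$. Option set $O(P_i)=\{f(P_i,P_{-i}):P_{-i}\in\mathcal{P}^{n-1}\}$. $P_i'$ is a manipulation at $P_i$ if $f(P_i',P_{-i})P_if(P_i,P_{-i})$ for some $P_{-i}$; it is obvious if the $P_i$-worst element of $O(P_i')$ is strictly $P_i$-better than that of $O(P_i)$, or the $P_i$-best element of $O(P_i')$ is strictly $P_i$-better than that of $O(P_i)$. NOM means no obvious manipulation exists. *)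

From mathcomp Require Import all_boot all_order.
Set Implicit Arguments. Unset Strict Implicit. Unset Printing Implicit Defensive.

Definition Xs (a b : nat) : seq nat := iota a (b - a + 1).

(* A strict linear order on X, encoded as its ranking: a list enumerating
   X exactly once, best first. *)
Definition pref (a b : nat) := {s : seq nat | perm_eq s (Xs a b)}.

Definition top (a b : nat) (P : pref a b) : nat := head a (val P).

Definition prefers (a b : nat) (P : pref a b) (x y : nat) : bool :=
  index x (val P) < index y (val P).

Definition profile (n a b : nat) := 'I_n -> pref a b.

Definition upd (n a b : nat) (P : profile n a b) (i : 'I_n) (Pi : pref a b)
  : profile n a b := fun j => if j == i then Pi else P j.

Definition monotonic_ballots (n a b : nat) (p : {set 'I_n} -> nat) : Prop :=
  [/\ p setT = a, p set0 = b, (forall S, a <= p S <= b)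
    & (forall Q T : {set 'I_n}, T \subset Q -> p Q <= p T)].

Definition gmvs (n a b : nat) (p : {set 'I_n} -> nat) (P : profile n a b) : nat :=
  \big[minn/b]_(S : {set 'I_n}) maxn (\max_(j in S) top (P j)) (p S).

Definition dictatorial (n a b : nat) (f : profile n a b -> nat) : Prop :=
  exists i : 'I_n, forall P : profile n a b, f P = top (P i).

Definition option_set (n a b : nat) (f : profile n a b -> nat) (i : 'I_n)
  (Pi : pref a b) (x : nat) : Prop :=
  exists P : profile n a b, f (upd P i Pi) = x.

Definition is_worst (a b : nat) (Pi : pref a b) (O : nat -> Prop) (w : nat) : Prop :=
  O w /\ forall o, O o -> o <> w -> prefers Pi o w.

Definition is_best (a b : nat) (Pi : pref a b) (O : nat -> Prop) (w : nat) : Prop :=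
  O w /\ forall o, O o -> o <> w -> prefers Pi w o.

Definition manipulation (n a b : nat) (f : profile n a b -> nat) (i : 'I_n)
  (Pi Pi' : pref a b) : Prop :=
  exists P : profile n a b, prefers Pi (f (upd P i Pi')) (f (upd P i Pi)).

Definition obvious_manipulation (n a b : nat) (f : profile n a b -> nat) (i : 'I_n)
  (Pi Pi' : pref a b) : Prop :=
  manipulation f i Pi Pi' /\
  ((exists w' w, is_worst Pi (option_set f i Pi') w' /\
                 is_worst Pi (option_set f i Pi) w /\ prefers Pi w' w) \/
   (exists b' b0, is_best Pi (option_set f i Pi') b' /\
                  is_best Pi (option_set f i Pi) b0 /\ prefers Pi b' b0)).

Definition NOM (n a b : nat) (f : profile n a b -> nat) : Prop :=
  forall (i : 'I_n) (Pi Pi' : pref a b), ~ obvious_manipulation f i Pi Pi'.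

From mathcomp Require Import all_boot all_order zify.

Set Implicit Arguments.
Unset Strict Implicit.
Unset Printing Implicit Defensive.

(* The option set of voter i reporting a ranking with top t is the interval
   [min (t, p_{N\i}), max (t, p_{i})].  Under truthful reporting it contains
   her top, so no misreport improves the best case; the worst case is improved
   exactly when some outcome x available under the true ranking P is excluded
   under the misreport P' (with x at the bottom of P, x is then the worst
   option of P and worse than every option of P').  When p_{N\i} <= a+1 and
   p_{i} >= b-1 such an x can only be the top of P, whose option set is then a
   singleton, so no manipulation exists at all; otherwise suitable t, t' and x
   exist unless p_{N\i} = b and p_{i} = a, which makes i a dictator. *)

Lemma exists_argmax (T : eqType) (s : seq T) (g : T -> nat) :
  s != [::] -> exists2 w, w \in s & {in s, forall o, g o <= g w}.
Proof.
elim: s => // x [|y s] IH _.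
  by exists x; rewrite ?mem_head // => o; rewrite inE => /eqP ->.
have [w ws wmax] := IH isT.
have [gxw | gwx] := leqP (g x) (g w).
  by exists w => [|o]; rewrite inE ?ws ?orbT // => /predU1P [->|/wmax].
exists x => [|o]; rewrite ?mem_head // inE => /predU1P [->//|/wmax]; lia.
Qed.

Section Rankings.

Variables a b : nat.
Hypothesis leab : a <= b.
Implicit Types P : pref a b.

Lemma mem_Xs x : (x \in Xs a b) = (a <= x <= b).
Proof. rewrite mem_iota; lia. Qed.

Lemma mem_pref P x : (x \in val P) = (a <= x <= b).
Proof. by rewrite (perm_mem (valP P)) mem_Xs. Qed.

Lemma pref_neq0 P : val P != [::].
Proof. by rewrite -size_eq0 (perm_size (valP P)) size_iota addn1. Qed.

Lemma top_in P : a <= top P <= b.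
Proof.
rewrite -(mem_pref P) /top.
by move: (pref_neq0 P); case: (val P) => //= y s _; rewrite mem_head.
Qed.

Lemma prefers_top P x : prefers P x (top P) = false.
Proof.
by rewrite /prefers /top; move: (pref_neq0 P); case: (val P) => //= y s _; rewrite eqxx.
Qed.

Lemma prefers_asym P x y : prefers P x y -> ~~ prefers P y x.
Proof. rewrite /prefers; lia. Qed.

Lemma exists_pref_top t : a <= t <= b -> exists P, top P = t.
Proof.
rewrite -mem_Xs => tX.
have perm_s : perm_eq (t :: rem t (Xs a b)) (Xs a b) by rewrite perm_sym perm_to_rem.
by exists (exist (fun s => perm_eq s (Xs a b)) _ perm_s).
Qed.

Lemma exists_pref_top_bottom t x : a <= t <= b -> a <= x <= b -> t != x ->
  exists P, top P = t /\ forall y, a <= y <= b -> y != x -> prefers P y x.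
Proof.
rewrite -!mem_Xs => tX xX tx.
have uX : uniq (Xs a b) by apply: iota_uniq.
have xXt : x \in rem t (Xs a b) by rewrite mem_rem_uniq // inE eq_sym tx.
set s := t :: rem x (rem t (Xs a b)).
have perm_s : perm_eq (rcons s x) (Xs a b).
  rewrite perm_sym (perm_trans (perm_to_rem tX)) //= perm_cons.
  by rewrite perm_sym perm_rcons perm_sym perm_to_rem.
exists (exist (fun s => perm_eq s (Xs a b)) _ perm_s); split=> // y.
rewrite -mem_Xs => yX yx.
have ys : y \in s.
  rewrite inE; case: eqP => //= /eqP yt.
  by rewrite mem_rem_uniq ?rem_uniq // inE yx mem_rem_uniq // inE yt.
have xNs : x \notin s by rewrite inE negb_or eq_sym tx mem_rem_uniqF ?rem_uniq.
change (index y (rcons s x) < index x (rcons s x)).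
rewrite -cats1 !index_cat ys (negbTE xNs).
by rewrite (leq_trans _ (leq_addr _ _)) // index_mem.
Qed.

Lemma exists_worst P (O : nat -> Prop) s : s != [::] -> {subset s <= Xs a b} ->
  (forall x, O x <-> x \in s) -> exists w, is_worst P O w.
Proof.
move=> s_neq0 sX Os.
have [w ws wmax] := exists_argmax (fun x => index x (val P)) s_neq0.
exists w; split=> [|o /Os os ow]; first exact/Os.
rewrite /prefers ltn_neqAle wmax // andbT.
have sP : {subset s <= val P} by move=> y /sX; rewrite mem_pref -mem_Xs.
by apply/eqP => /(index_inj 0 (sP _ os) (sP _ ws)).
Qed.

Lemma is_best_top P (O : nat -> Prop) w : O (top P) -> is_best P O w -> w = top P.
Proof.
move=> Otop [_ wbest]; apply/eqP; apply: contraT => wtop.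
by rewrite -(prefers_top P w) wbest //; apply/eqP; rewrite eq_sym.
Qed.

Lemma is_worst_top P (O : nat -> Prop) x : is_worst P O (top P) -> O x -> x = top P.
Proof.
move=> [_ topworst] Ox; apply/eqP; apply: contraT => xtop.
by rewrite -(prefers_top P x) topworst //; apply/eqP.
Qed.

Lemma is_worst_excludes_worse P (O : nat -> Prop) w w' :
  is_worst P O w' -> prefers P w' w -> ~ O w.
Proof.
move=> [_ w'worst] w'w Ow; have [eww'|nww'] := eqVneq w w'.
  by move: w'w; rewrite eww' /prefers ltnn.
by move: (w'worst w Ow (elimN eqP nww')); apply/negP/prefers_asym.
Qed.

End Rankings.

Definition option_range (l r t x : nat) : bool := minn t l <= x <= maxn t r.

Lemma option_range_excluded_top a b l r t t' x :
  l <= a.+1 -> b.-1 <= r -> a <= t <= b ->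
  option_range l r t x -> ~~ option_range l r t' x -> x = t.
Proof. rewrite /option_range; lia. Qed.

Lemma exists_excluded_option a b l r : a <= l <= b -> a <= r <= b ->
  ~ (l = b /\ r = a) -> (a.+1 < l) || (r < b.-1) ->
  exists t t' x, [/\ a <= t <= b, a <= t' <= b, t != x,
                     option_range l r t x & ~~ option_range l r t' x].
Proof.
rewrite /option_range => lX rX not_dict /orP [la | rb].
- have [ra | ar] := leqP r a.
  + have lb : l != b by apply/eqP => lb; apply: not_dict; split; lia.
    by exists b, a, l; split; lia.
  + by exists a, l, a.+1; split; lia.
- have [bl | lb] := leqP b l.
  + have ra : r != a by apply/eqP => ra; apply: not_dict; split; lia.
    by exists a, b, r; split; lia.
  + by exists b, r, b.-1; split; lia.
Qed.

Section GeneralizedMedianVoterScheme.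

Variables (n a b : nat) (p : {set 'I_n} -> nat).
Hypothesis leab : a <= b.
Hypothesis hp : monotonic_ballots a b p.

Local Notation f := (@gmvs n a b p).
Local Notation lo i := (p (setT :\ i)).
Local Notation hi i := (p [set i]).

Lemma lo_in i : a <= lo i <= b.
Proof. by case: hp => _ _ ->. Qed.

Lemma hi_in i : a <= hi i <= b.
Proof. by case: hp => _ _ ->. Qed.

Lemma option_range_in i t y :
  a <= t <= b -> option_range (lo i) (hi i) t y -> a <= y <= b.
Proof. by move: (lo_in i) (hi_in i); rewrite /option_range; lia. Qed.

Lemma gmvs_le (P : profile n a b) (S : {set 'I_n}) :
  f P <= maxn (\max_(j in S) top (P j)) (p S).
Proof. by rewrite /gmvs -minEnat; apply: (@Order.TotalTheory.bigmin_le _ nat). Qed.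

Lemma gmvs_ge (P : profile n a b) y : y <= b ->
  (forall S : {set 'I_n}, y <= maxn (\max_(j in S) top (P j)) (p S)) -> y <= f P.
Proof.
by move=> yb yS; rewrite /gmvs; elim/big_ind: _ => // x z; rewrite leq_min => -> ->.
Qed.

Lemma gmvs_option_range (P : profile n a b) i :
  option_range (lo i) (hi i) (top (P i)) (f P).
Proof.
have [_ _ _ pmono] := hp.
apply/andP; split; last first.
  apply: leq_trans (gmvs_le P [set i]) _.
  by rewrite big_set1 geq_max leq_maxl leq_maxr.
apply: gmvs_ge => [|S]; first by have := lo_in i; lia.
have [iS | iNS] := boolP (i \in S).
  rewrite (leq_trans (geq_minl _ _)) // (leq_trans _ (leq_maxl _ _)) //.
  exact: leq_bigmax_cond.
rewrite (leq_trans (geq_minr _ _)) // (leq_trans _ (leq_maxr _ _)) // pmono //.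
by apply/subsetP => j jS; rewrite !inE andbT; apply: contraNneq iNS => <-.
Qed.

Lemma top_upd (P : profile n a b) i Pi j :
  top (upd P i Pi j) = if j == i then top Pi else top (P j).
Proof. by rewrite /upd; case: (j == i). Qed.

Lemma gmvs_upd_const i Pi Py y : top Py = y ->
  option_range (lo i) (hi i) (top Pi) y -> f (upd (fun _ => Py) i Pi) = y.
Proof.
move=> Pyy /andP [ly yr]; set P := upd _ i Pi.
have [pT p0 _ _] := hp.
have topP j : j != i -> top (P j) = y by rewrite top_upd Pyy => /negbTE ->.
apply/eqP; rewrite eqn_leq; apply/andP; split.
  have [ty | yt] := leqP (top Pi) y.
    apply: leq_trans (gmvs_le P setT) _; rewrite pT geq_max.
    apply/andP; split; last by have := top_in leab Pi; lia.
    by apply/bigmax_leqP => j _; rewrite top_upd Pyy; case: ifP.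
  apply: leq_trans (gmvs_le P (setT :\ i)) _; rewrite geq_max; apply/andP; split.
    by apply/bigmax_leqP => j; rewrite !inE andbT => /topP ->.
  lia.
apply: gmvs_ge => [|S]; first by have := top_in leab Py; lia.
have [|/subsetPn [j jS jNi]] := boolP (S \subset [set i]).
  rewrite subset1 => /orP [/eqP -> | /eqP ->].
    by rewrite big_set1 top_upd eqxx (leq_trans yr) // geq_max leq_maxl leq_maxr.
  by rewrite p0; have := top_in leab Py; lia.
rewrite -(topP j); last by apply: contraNneq jNi => ->; rewrite set11.
by rewrite (leq_trans _ (leq_maxl _ _)) // leq_bigmax_cond.
Qed.

Lemma option_setE i Pi x :
  option_set f i Pi x <-> option_range (lo i) (hi i) (top Pi) x.
Proof.
split=> [[P <-] | xr].
  by have := gmvs_option_range (upd P i Pi) i; rewrite top_upd eqxx.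
have [Px Pxx] : exists Px : pref a b, top Px = x.
  exact/exists_pref_top/(option_range_in (top_in leab Pi) xr).
by exists (fun _ => Px); apply: gmvs_upd_const.
Qed.

Lemma gmvs_dictatorial i : lo i = b -> hi i = a -> dictatorial f.
Proof.
move=> lb ha; exists i => P.
have := gmvs_option_range P i; have := top_in leab (P i).
by rewrite /option_range lb ha; lia.
Qed.

Lemma exists_worst_option i (P P' : pref a b) :
  exists w, is_worst P (option_set f i P') w.
Proof.
set l := minn (top P') (lo i); set r := maxn (top P') (hi i).
apply: (@exists_worst a b leab P _ (iota l (r - l + 1))).
- by rewrite -size_eq0 size_iota addn1.
- move=> y; rewrite mem_iota mem_Xs // => yr.
  apply: (option_range_in (i := i) (top_in leab P')).
  by rewrite /option_range -/l -/r; lia.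
- by move=> y; rewrite option_setE mem_iota /option_range -/l -/r; lia.
Qed.

Lemma obvious_manipulation_excluded i P P' x :
  (forall y, a <= y <= b -> y != x -> prefers P y x) ->
  option_range (lo i) (hi i) (top P) x -> ~~ option_range (lo i) (hi i) (top P') x ->
  obvious_manipulation f i P P'.
Proof.
move=> xbottom xP xNP'.
have option_P'_neq y : option_set f i P' y -> a <= y <= b /\ y != x.
  move=> /option_setE yr; split; last by apply: contraNneq xNP' => <-.
  exact: option_range_in (top_in leab P') yr.
have [Q fQ] := proj2 (option_setE i P x) xP.
split.
  exists Q; rewrite fQ.
  by have [yX yx] := option_P'_neq _ (ex_intro _ Q erefl); apply: xbottom.
left; have [w' w'worst] := exists_worst_option i P P'.
exists w', x; split=> //; split.
  split=> [|o /option_setE or ox]; first exact/option_setE.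
  apply: xbottom; last exact/eqP.
  exact: option_range_in (top_in leab P) or.
by case: w'worst => /option_P'_neq [yX yx] _; apply: xbottom.
Qed.

Lemma no_obvious_manipulation i Pi Pi' : lo i <= a.+1 -> b.-1 <= hi i ->
  ~ obvious_manipulation f i Pi Pi'.
Proof.
move=> lo_small hi_large [[Q manip]].
case=> [[w' [w [w'worst [wworst w'w]]]] | [v' [v [_ [vbest v'v]]]]].
  have wNP' : ~~ option_range (lo i) (hi i) (top Pi') w.
    by apply/negP => /option_setE; apply: is_worst_excludes_worse w'worst w'w.
  have wPi : option_range (lo i) (hi i) (top Pi) w by apply/option_setE; case: wworst.
  have wtop := option_range_excluded_top lo_small hi_large (top_in leab Pi) wPi wNP'.
  rewrite wtop in wworst.
  by move: manip; rewrite (is_worst_top wworst (ex_intro _ Q erefl)) prefers_top.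
have topPi : option_set f i Pi (top Pi).
  by apply/option_setE; rewrite /option_range geq_minl leq_maxl.
by move: v'v; rewrite (is_best_top topPi vbest) prefers_top.
Qed.

Lemma exists_obvious_manipulation i : ~ dictatorial f ->
  (a.+1 < lo i) || (hi i < b.-1) -> exists Pi Pi', obvious_manipulation f i Pi Pi'.
Proof.
move=> not_dict out_of_range.
have not_dict_ballots : ~ (lo i = b /\ hi i = a).
  by case=> lb ha; apply: not_dict; apply: gmvs_dictatorial lb ha.
have [t [t' [x [tX t'X tx xt xNt']]]] :=
  exists_excluded_option (lo_in i) (hi_in i) not_dict_ballots out_of_range.
have [P [Pt xbottom]] := exists_pref_top_bottom leab tX (option_range_in tX xt) tx.
have [P' P't'] := exists_pref_top leab t'X.
by exists P, P'; apply: obvious_manipulation_excluded xbottom _ _; rewrite ?Pt ?P't'.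
Qed.

End GeneralizedMedianVoterScheme.

Theorem theorem3 (n a b : nat) (hn : 2 <= n) (hab : a < b)
  (p : {set 'I_n} -> nat) (hp : monotonic_ballots a b p)
  (hnd : ~ dictatorial (@gmvs n a b p)) :
  NOM (@gmvs n a b p) <->
  (forall i : 'I_n,
     ((p (setT :\ i) == a) || (p (setT :\ i) == a.+1)) /\
     ((p [set i] == b.-1) || (p [set i] == b))).
Proof.
have leab := ltnW hab.
(* [set] identifies the differently elaborated copies of [p (setT :\ i)],
   which [lia] would otherwise treat as distinct atoms. *)
split=> [nom i | ranges i Pi Pi'].
  have : ~~ ((a.+1 < p (setT :\ i)) || (p [set i] < b.-1)).
    apply/negP => /(exists_obvious_manipulation leab hp hnd) [Pi [Pi' om]].
    exact: nom om.
  move: (lo_in hp i) (hi_in hp i); set l := p (setT :\ i); set r := p [set i].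
  lia.
apply: (no_obvious_manipulation leab hp); have := ranges i;
  set l := p (setT :\ i); set r := p [set i]; lia.
Qed.
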